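(* Let $(X,\mathcal U)$ be a non-archimedean precompact uniform space and let $G\in\{F^{Prec}_{NA}(X,\mathcal U),F_{Pro}(X,\mathcal U)\}$ with universal map $i\colon X\to G$. Then: (1) $i\colon(X,\mathcal U)\to G$ is a uniform embedding; (2) $F^{Prec}_{NA}(X,\mathcal U)$ is algebraically the free group on $i(X)$; (3) $i(X)$ is a closed subspace of $F^{Prec}_{NA}(X,\mathcal U)$.
   Context: All uniform spaces and groups are Hausdorff; groups carry their two-sided uniformity. A uniform space is non-archimedean if it has a base of equivalence relations, precompact if for every entourage $\varepsilon$ some finite $A$ has $\varepsilon(A)=X$. A topological group is non-archimedean if it has a local base at the identity of open subgroups. $F^{Prec}_{NA}(X,\mathcal U)$ (resp. $F_{Pro}(X,\mathcal U)$) is the precompact non-archimedean (resp. profinite) group with uniformly continuous $i\colon X\to G$ such that every uniformly continuous map from $X$ into a precompact non-archimedean (resp. profinite) group factors uniquely as a continuous homomorphism composed with $i$. *)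

From HB Require Import structures.
From mathcomp Require Import all_boot all_order monoid.
From mathcomp Require Import all_classical all_reals topology.

Set Implicit Arguments.
Unset Strict Implicit.
Unset Printing Implicit Defensive.

Local Open Scope classical_set_scope.
Local Open Scope group_scope.

HB.mixin Record isTopGroup G of Group G & Topological G := {
  mul_continuous : continuous (fun p : G * G => p.1 * p.2);
  inv_continuous : continuous (fun x : G => x^-1)
}.

#[short(type="topGroupType")]
HB.structure Definition TopGroup := {G of isTopGroup G & Group G & Topological G}.

Section TopGroupDefs.
Variable G : topGroupType.

(* basic entourage of the two-sided uniformity associated with a
   neighbourhood U of the identity *)
Definition two_sided_ent (U : set G) : set (G * G) :=
  [set p | U (p.1^-1 * p.2) /\ U (p.2 * p.1^-1)].

Definition is_subgroup (H : set G) :=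
  H 1 /\ (forall x y, H x -> H y -> H (x * y)) /\ (forall x, H x -> H x^-1).

Definition na_group :=
  forall U : set G, nbhs (1 : G) U ->
    exists H : set G, [/\ is_subgroup H, open H & H `<=` U].

Definition precompact_group :=
  forall U : set G, nbhs (1 : G) U ->
    exists A : seq G, forall y : G, exists2 a, a \in A & two_sided_ent U (a, y).

Definition profinite_group :=
  [/\ hausdorff_space G, compact [set: G] & totally_disconnected [set: G]].

Definition prec_na_group := [/\ hausdorff_space G, precompact_group & na_group].
End TopGroupDefs.

Definition group_hom (G H : groupType) (f : G -> H) :=
  {morph f : x y / x * y}.

Definition equiv_rel_set (T : Type) (R : set (T * T)) :=
  [/\ (forall x, R (x, x)), (forall x y, R (x, y) -> R (y, x))
    & (forall x y z, R (x, y) -> R (y, z) -> R (x, z))].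

Definition na_uniform (X : uniformType) :=
  forall E, @entourage X E -> exists2 R, @entourage X R & equiv_rel_set R /\ R `<=` E.

Definition precompact_uniform (X : uniformType) :=
  forall E, @entourage X E ->
    exists A : seq X, forall y : X, exists2 a, a \in A & E (a, y).

Definition unif_cont_to_group (X : uniformType) (G : topGroupType) (f : X -> G) :=
  forall U : set G, nbhs (1 : G) U ->
    exists2 E, @entourage X E & forall x y, E (x, y) -> two_sided_ent U (f x, f y).

(* uniform embedding: injective uniform isomorphism onto the image
   (the image carrying the subspace uniformity) *)
Definition unif_embedding (X : uniformType) (G : topGroupType) (f : X -> G) :=
  [/\ injective f, unif_cont_to_group f &
      forall E, @entourage X E -> exists2 U : set G, nbhs (1 : G) U &
        forall x y, two_sided_ent U (f x, f y) -> E (x, y)].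

Definition free_universal (P : topGroupType -> Prop)
    (X : uniformType) (G : topGroupType) (i : X -> G) :=
  [/\ P G, unif_cont_to_group i &
      forall (H : topGroupType) (f : X -> H), P H -> unif_cont_to_group f ->
        exists phi : G -> H,
          [/\ group_hom phi, continuous phi, phi \o i = f &
              forall psi : G -> H, group_hom psi -> continuous psi ->
                psi \o i = f -> psi = phi]].

Definition is_FPrecNA := free_universal (@prec_na_group).
Definition is_FPro := free_universal (@profinite_group).

Definition free_group_on (G : groupType) (S : set G) :=
  forall (H : groupType) (f : G -> H),
    exists phi : G -> H, [/\ group_hom phi, {in S, phi =1 f} &
      forall psi : G -> H, group_hom psi -> {in S, psi =1 f} -> psi = phi].

From HB Require Import structures.
From mathcomp Require Import all_boot all_order monoid fingroup perm zify.
From mathcomp Require Import all_classical all_reals topology.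

Set Implicit Arguments.
Unset Strict Implicit.
Unset Printing Implicit Defensive.

Local Open Scope classical_set_scope.
Local Open Scope group_scope.

(* A map from X to a finite discrete group that is constant on the classes of
   an equivalence entourage is uniformly continuous, so by universality it
   factors through a continuous hom on G.  For a reduced word w of length n,
   separate its letters by such an entourage and send each point to the
   permutation of {0, ..., n+1} attached to the letter in its class, the
   letters of w acting along a path so that w moves 0 to n: hence w <> 1 in G
   unless w is empty, and the fibre of this hom through a point outside i(X)
   is an open set missing i(X).  Sending the classes of a finite net to
   distinct permutations shows that i is a uniform embedding.  Finally the
   subgroup generated by i(X) is again precompact and non-archimedean, so by
   uniqueness in the universal property it is all of G, which is therefore
   free on i(X). *)

Section GroupHom.
Variables (G H : groupType) (f : G -> H).
Hypothesis f_hom : group_hom f.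

Lemma group_hom1 : f 1 = 1.
Proof. by apply: (mulgI (f 1)); rewrite -f_hom !mulg1. Qed.

Lemma group_homV x : f x^-1 = (f x)^-1.
Proof. by apply: (mulgI (f x)); rewrite -f_hom !mulgV group_hom1. Qed.

End GroupHom.

Section Words.
Variable T : eqType.

Definition word := seq (T * bool).

Definition eval_letter (G : groupType) (g : T -> G) (p : T * bool) : G :=
  if p.2 then g p.1 else (g p.1)^-1.

Definition eval_word (G : groupType) (g : T -> G) (w : word) : G :=
  \big[*%g/1]_(p <- w) eval_letter g p.

Definition inv_word (w : word) : word := rev [seq (p.1, ~~ p.2) | p <- w].

Lemma eval_word_cat (G : groupType) (g : T -> G) u v :
  eval_word g (u ++ v) = eval_word g u * eval_word g v.
Proof. exact: big_cat. Qed.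

Lemma eval_word1 (G : groupType) (g : T -> G) x : eval_word g [:: (x, true)] = g x.
Proof. by rewrite /eval_word big_seq1. Qed.

Lemma eval_inv_word (G : groupType) (g : T -> G) w :
  eval_word g (inv_word w) = (eval_word g w)^-1.
Proof.
rewrite /eval_word -[w in RHS]revK -prodgV /inv_word -map_rev big_map.
by apply: eq_bigr => -[x []] _; rewrite /eval_letter /= ?invgK.
Qed.

Lemma eval_word_hom (G H : groupType) (f : G -> H) (g : T -> G) w :
  group_hom f -> f (eval_word g w) = eval_word (f \o g) w.
Proof.
move=> f_hom; rewrite (big_morph f f_hom (group_hom1 f_hom)).
by apply: eq_bigr => -[x []] _; rewrite /eval_letter //= group_homV.
Qed.

Lemma eq_in_eval_word (G : groupType) (g1 g2 : T -> G) w :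
  {in map fst w, g1 =1 g2} -> eval_word g1 w = eval_word g2 w.
Proof.
move=> eg; rewrite /eval_word big_seq_cond [RHS]big_seq_cond.
apply: eq_bigr => p /andP[pw _]; rewrite /eval_letter eg //.
by apply/mapP; exists p.
Qed.

Definition cancels (p q : T * bool) := (p.1 == q.1) && (p.2 != q.2).

Definition reduced (w : word) := sorted (fun p q => ~~ cancels p q) w.

Definition reduce (w : word) : word :=
  foldr (fun p r => if r is q :: r' then if cancels p q then r' else p :: r
                    else [:: p]) [::] w.

Lemma eval_reduce (G : groupType) (g : T -> G) w :
  eval_word g (reduce w) = eval_word g w.
Proof.
rewrite /eval_word; elim: w => [|p w IH] //=; rewrite big_cons -IH.
case: (reduce w) => [|q r] /=; first by rewrite big_seq1 big_nil mulg1.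
case: ifP => [/andP[/eqP pq p2q]|_]; last by rewrite big_cons.
rewrite big_cons mulgA /eval_letter pq.
by case: p q pq p2q => [x [] [y []]] //= _ _; rewrite ?mulgV ?mulVg mul1g.
Qed.

Lemma reduce_reduced w : reduced (reduce w).
Proof.
elim: w => [|p w] //=; rewrite /reduced.
case: (reduce w) => [|q r] //= red_qr; case: ifP => [_|/negbT pq].
  by case: r red_qr => //= ? ? /andP[].
by rewrite /= pq.
Qed.

End Words.

Lemma partial_inj_perm (S : finType) (f : S -> option S) :
  (forall p q y, f p = Some y -> f q = Some y -> p = q) ->
  exists s : {perm S}, forall p y, f p = Some y -> s p = y.
Proof.
move=> f_inj; pose D := [set p | f p != None]%SET; pose fD p := odflt p (f p).
have fD_inj : {in D &, injective fD}.
  move=> p q; rewrite !inE /fD.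
  case fp: (f p) => [y|] //; case fq: (f q) => [z|] //= _ _ yz.
  by apply: f_inj fp _; rewrite fq yz.
(* the complements of D and of f(D) have the same size: match them up in order *)
pose dom' := enum (~: D); pose img' := enum (~: (fD @: D)).
have size_img' : size dom' = size img'.
  by rewrite -!cardE [LHS]cardsCs [RHS]cardsCs !finset.setCK card_in_imset.
have index_dom' p : p \notin D -> index p dom' < size img'.
  by move=> pD; rewrite -size_img' index_mem mem_enum inE.
pose F p := if p \in D then fD p else nth p img' (index p dom').
have F_out p : p \notin D -> F p \notin fD @: D.
  move=> pD; rewrite /F (negbTE pD).
  by have /(mem_nth p) := index_dom' p pD; rewrite mem_enum inE.
have F_inj : injective F.
  move=> p q; case: (boolP (p \in D)) => pD; case: (boolP (q \in D)) => qD.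
  - by rewrite /F pD qD; apply: fD_inj.
  - by move=> Fpq; have := F_out q qD; rewrite -Fpq /F pD imset_f.
  - by move=> Fpq; have := F_out p pD; rewrite Fpq /F qD imset_f.
  - rewrite /F (negbTE pD) (negbTE qD) (set_nth_default q p (index_dom' p pD)).
    move/eqP; rewrite nth_uniq ?enum_uniq ?index_dom' // => /eqP pq.
    by apply: (index_inj p _ _ pq); rewrite mem_enum inE.
by exists (perm F_inj) => p y fp; rewrite permE /F inE fp /= /fD fp.
Qed.

Section WordPermutation.
Variables (U : eqType) (r : word U).
Hypothesis r_reduced : reduced r.
Local Notation n := (size r).

Let inordE k : k <= n.+1 -> (inord k : 'I_n.+2) = k :> nat.
Proof. by move=> ?; rewrite inordK. Qed.

Definition letter_at (j : nat) (l : U * bool) := (j < n) && (nth l r j == l).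

Lemma letter_at_cancel j u b : letter_at j (u, b) -> ~~ letter_at j.+1 (u, ~~ b).
Proof.
move=> /andP[jn /eqP rj]; apply/negP => /andP[j1n /eqP rj1].
move/sortedP: r_reduced => /(_ (u, b) j j1n).
rewrite rj (set_nth_default (u, ~~ b) (u, b) j1n) rj1 /cancels /= eqxx.
by case: b {rj rj1}.
Qed.

(* The letter (u, true) at position j moves the point j to j.+1 and the letter
   (u, false) at position j moves j.+1 to j; the point 0 goes to n.+1 when
   nothing else is prescribed, so that a single letter other than (u, true)
   never moves 0 to n. *)
Definition letter_step (u : U) (p : 'I_n.+2) : option 'I_n.+2 :=
  if letter_at p (u, true) then Some (inord p.+1)
  else if (0 < p) && letter_at p.-1 (u, false) then Some (inord p.-1)
  else if p == 0 :> nat then Some ord_max else None.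

Lemma letter_stepP u (p y : 'I_n.+2) : letter_step u p = Some y ->
  [\/ [/\ p < n, letter_at p (u, true) & y = p.+1 :> nat],
      [/\ 0 < p, p <= n, letter_at p.-1 (u, false) & y = p.-1 :> nat] |
      p = 0 :> nat /\ y = n.+1 :> nat].
Proof.
rewrite /letter_step; case: ifP => [at_p [<-]|_].
  by apply: Or31; case/andP: (at_p) => pn _; rewrite inordE // ltnW.
case: ifP => [/andP[p0 at_p] [<-]|_].
  apply: Or32; case/andP: (at_p) => pn _; rewrite inordE; last lia.
  by split => //; lia.
by case: ifP => [/eqP p0 [<-]|//]; apply: Or33.
Qed.

Lemma letter_step_inj u p q y :
  letter_step u p = Some y -> letter_step u q = Some y -> p = q.
Proof.
move=> /letter_stepP sp /letter_stepP sq; apply/val_inj => /=.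
case: sp => [[pn atp yp]|[p0 pn atp yp]|[p0 yp]];
  case: sq => [[qn atq yq]|[q0 qn atq yq]|[q0 yq]]; try lia.
- have qp : q.-1 = p.+1 by lia.
  by move: (letter_at_cancel atp); rewrite -qp atq.
- have pq : p.-1 = q.+1 by lia.
  by move: (letter_at_cancel atq); rewrite -pq atp.
Qed.

Definition word_perm (u : U) : {perm 'I_n.+2} :=
  sval (cid (partial_inj_perm (@letter_step_inj u))).

Lemma word_permE u p y : letter_step u p = Some y -> word_perm u p = y.
Proof. exact: (svalP (cid (partial_inj_perm (@letter_step_inj u)))). Qed.

Lemma eval_letter_word_perm j l :
  letter_at j l -> eval_letter word_perm l (inord j) = inord j.+1.
Proof.
case: l => u [] /[dup] atj /andP[jn _]; rewrite /eval_letter /=.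
  by apply: word_permE; rewrite /letter_step inordE ?atj //; lia.
apply: (canLR (permK (word_perm u))); apply/esym/word_permE.
have /= /negbTE not_at_next := letter_at_cancel atj.
by rewrite /letter_step !inordE /= ?not_at_next ?atj //; lia.
Qed.

Lemma eval_word_perm : (eval_word word_perm r) (inord 0) = inord n.
Proof.
suff drop_perm k :
    k <= n -> (eval_word word_perm (drop (n - k) r)) (inord (n - k)) = inord n.
  by have := drop_perm n (leqnn n); rewrite subnn drop0.
elim: k => [|k IH] kn; first by rewrite subn0 drop_size /eval_word big_nil perm1.
set j := n - k.+1; have lt_jn : j < n by lia.
case def_drop: (drop j r) => [|l rest].
  by move: (congr1 size def_drop); rewrite size_drop /=; lia.
have := drop_nth l lt_jn; rewrite def_drop => -[rj ->].
have atj : letter_at j l by rewrite /letter_at lt_jn -rj eqxx.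
rewrite /eval_word big_cons permM -/(eval_word _ _) eval_letter_word_perm //.
have -> : j.+1 = n - k by lia.
exact: IH (ltnW kn).
Qed.

Lemma word_perm0 u : word_perm u (inord 0) != inord n \/ r = [:: (u, true)].
Proof.
have neq_n k : k <= n.+1 -> k != n -> (inord k : 'I_n.+2) != inord n.
  by move=> kn kNn; apply: contra kNn => /eqP/(congr1 val); rewrite /= !inordE // => ->.
case: (boolP (letter_at 0 (u, true))) => [at0|not_at0].
  have -> : word_perm u (inord 0) = inord 1%N.
    by apply: word_permE; rewrite /letter_step inordE ?at0.
  have [n1|n1] := eqVneq n 1%N; last by left; apply: neq_n => //; lia.
  right; case/andP: at0 => _; clear neq_n.
  by case: r r_reduced n1 => [|l [|? ?]] //= _ _ /eqP ->.
have -> : word_perm u (inord 0) = ord_max.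
  by apply: word_permE; rewrite /letter_step inordE ?(negbTE not_at0).
by left; rewrite -[ord_max]inord_val neq_n //=; apply/eqP; lia.
Qed.

End WordPermutation.

Definition discrete_group (T : finGroupType) := discrete_topology T.
HB.instance Definition _ (T : finGroupType) := Group.copy (discrete_group T) T.
HB.instance Definition _ (T : finGroupType) :=
  DiscreteTopology.copy (discrete_group T) (discrete_topology T).
HB.instance Definition _ (T : finGroupType) := Finite.copy (discrete_group T) T.

Section DiscreteGroup.
Variable T : finGroupType.

Lemma discrete_group_continuous (Y : topologicalType) (f : discrete_group T -> Y) :
  continuous f.
Proof. by apply/continuousP => A _; apply: discrete_open. Qed.

Lemma discrete_group_continuous2 (Y : topologicalType)
    (f : discrete_group T * discrete_group T -> Y) : continuous f.
Proof.
move=> [a b] V /= fV; exists ([set a], [set b]) => /=.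
  by split; apply: discrete_set1.
by move=> [x y] [/= -> ->]; apply: nbhs_singleton.
Qed.

HB.instance Definition _ := isTopGroup.Build (discrete_group T)
  (@discrete_group_continuous2 _ _) (@discrete_group_continuous _ _).

Lemma discrete_group_prec_na : prec_na_group (discrete_group T).
Proof.
split; first exact: discrete_hausdorff.
- move=> U U1; exists (enum T) => y; exists y; first by rewrite mem_enum.
  by rewrite /two_sided_ent /= mulVg mulgV; split; apply: nbhs_singleton.
- move=> U U1; exists [set 1]; split; last by move=> x ->; apply: nbhs_singleton.
  + by split => //; split => [x y -> ->|x ->]; rewrite ?mulg1 ?invg1.
  + exact: discrete_open.
Qed.

Lemma discrete_group_profinite : profinite_group (discrete_group T).
Proof.
split; first exact: discrete_hausdorff.
- exact/finite_compact/finite_finset.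
- exact: zero_dimension_totally_disconnected discrete_zero_dimension.
Qed.

End DiscreteGroup.

Lemma two_sided_ent_equiv (G : topGroupType) (K : set G) :
  is_subgroup K -> equiv_rel_set (two_sided_ent K).
Proof.
move=> [K1 [KM KV]]; rewrite /two_sided_ent.
split => [x|x y [l r]|x y z [l r] [l' r']] /=.
- by rewrite mulVg mulgV.
- have -> : y^-1 * x = (x^-1 * y)^-1 by rewrite invgM invgK.
  have -> : x * y^-1 = (y * x^-1)^-1 by rewrite invgM invgK.
  by split; apply: KV.
- have -> : x^-1 * z = (x^-1 * y) * (y^-1 * z) by rewrite -mulgA mulVKg.
  have -> : z * x^-1 = (z * y^-1) * (y * x^-1) by rewrite -mulgA mulKg.
  by split; apply: KM.
Qed.

Lemma continuous_pair_map (A B C D : topologicalType) (f : A -> C) (g : B -> D) :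
  continuous f -> continuous g -> continuous (fun p : A * B => (f p.1, g p.2)).
Proof.
move=> cf cg [a b]; apply: cvg_pair => /=.
- exact: (@continuous_comp _ _ _ fst f (a, b) (@cvg_fst _ _ _ _ _) (cf a)).
- exact: (@continuous_comp _ _ _ snd g (a, b) (@cvg_snd _ _ _ _ _) (cg b)).
Qed.

Definition subgroup_type (G : topGroupType) (S : set G) of is_subgroup S : Type :=
  set_type S.

Section Subgroup.
Variables (G : topGroupType) (S : set G) (S_subgroup : is_subgroup S).
Local Notation H := (subgroup_type S_subgroup).

HB.instance Definition _ := Choice.copy H (set_type S).
HB.instance Definition _ := Topological.copy H (set_type S).

Definition subgroup_val (a : H) : G := set_val a.
Local Notation sv := subgroup_val.

Lemma subgroup_val_inj : injective sv.
Proof. by move=> a b /val_inj. Qed.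

Lemma subgroup_valP (a : H) : S (sv a).
Proof. exact: set_valP. Qed.

Definition subgroup_elt (g : G) (Sg : S g) : H := SigSub (mem_set Sg).

Let S1 : S 1 := S_subgroup.1.
Let SM : forall x y, S x -> S y -> S (x * y) := S_subgroup.2.1.
Let SV : forall x, S x -> S x^-1 := S_subgroup.2.2.

Definition subgroup_one : H := subgroup_elt S1.
Definition subgroup_mul (a b : H) : H :=
  subgroup_elt (SM (subgroup_valP a) (subgroup_valP b)).
Definition subgroup_inv (a : H) : H := subgroup_elt (SV (subgroup_valP a)).

Lemma subgroup_mulA : associative subgroup_mul.
Proof. by move=> a b c; apply: subgroup_val_inj; apply: mulgA. Qed.
Lemma subgroup_mul1g : left_id subgroup_one subgroup_mul.
Proof. by move=> a; apply: subgroup_val_inj; apply: mul1g. Qed.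
Lemma subgroup_mulg1 : right_id subgroup_one subgroup_mul.
Proof. by move=> a; apply: subgroup_val_inj; apply: mulg1. Qed.
Lemma subgroup_mulVg : left_inverse subgroup_one subgroup_inv subgroup_mul.
Proof. by move=> a; apply: subgroup_val_inj; apply: mulVg. Qed.
Lemma subgroup_mulgV : right_inverse subgroup_one subgroup_inv subgroup_mul.
Proof. by move=> a; apply: subgroup_val_inj; apply: mulgV. Qed.

HB.instance Definition _ := isGroup.Build H
  subgroup_mulA subgroup_mul1g subgroup_mulg1 subgroup_mulVg subgroup_mulgV.

Lemma subgroup_val_continuous : continuous sv.
Proof. exact: initial_continuous. Qed.

Lemma subgroup_mul_continuous : continuous (fun p : H * H => p.1 * p.2).
Proof.
apply: (@continuous_comp_initial _ _ _ sv).
have -> : sv \o (fun p : H * H => p.1 * p.2) =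
  (fun q : G * G => q.1 * q.2) \o (fun p : H * H => (sv p.1, sv p.2)) by [].
move=> p; apply: continuous_comp; last exact: mul_continuous.
exact: continuous_pair_map subgroup_val_continuous subgroup_val_continuous p.
Qed.

Lemma subgroup_inv_continuous : continuous (fun a : H => a^-1).
Proof.
apply: (@continuous_comp_initial _ _ _ sv).
have -> : sv \o (fun a : H => a^-1) = (fun g : G => g^-1) \o sv by [].
move=> a; apply: continuous_comp; last exact: inv_continuous.
exact: subgroup_val_continuous.
Qed.

HB.instance Definition _ :=
  isTopGroup.Build H subgroup_mul_continuous subgroup_inv_continuous.

Lemma subgroup_valM (a b : H) : sv (a * b) = sv a * sv b. Proof. by []. Qed.
Lemma subgroup_valV (a : H) : sv a^-1 = (sv a)^-1. Proof. by []. Qed.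

Lemma subgroup_nbhs1 (U : set H) : nbhs 1 U ->
  exists V : set G, [/\ open V, V 1 & sv @^-1` V `<=` U].
Proof.
rewrite nbhsE => -[B [[V oV VB] B1] BU]; exists V.
by split => //; rewrite ?VB //; rewrite -VB in B1.
Qed.

Lemma subgroup_nbhs1_open_subgroup (U : set H) : na_group G -> nbhs 1 U ->
  exists K : set G, [/\ is_subgroup K, open K & sv @^-1` K `<=` U].
Proof.
move=> naG /subgroup_nbhs1 [V [oV V1 VU]].
have [K [K_sub oK KV]] := naG V (open_nbhs_nbhs (conj oV V1)).
by exists K; split => // a /KV; apply: VU.
Qed.

Lemma subgroup_hausdorff : hausdorff_space G -> hausdorff_space H.
Proof.
move=> hG a b ab; apply: subgroup_val_inj; apply: hG => A B nA nB.
have [c [Ac Bc]] := ab _ _ (subgroup_val_continuous nA) (subgroup_val_continuous nB).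
by exists (sv c).
Qed.

Lemma subgroup_na : na_group G -> na_group H.
Proof.
move=> naG U /(subgroup_nbhs1_open_subgroup naG) [K [[K1 [KM KV]] oK KU]].
exists (sv @^-1` K); split => //.
- split => //; split => [a b|a] /=; rewrite ?subgroup_valM ?subgroup_valV.
  + exact: KM.
  + exact: KV.
- by move/continuousP: subgroup_val_continuous; apply.
Qed.

Lemma subgroup_precompact : na_group G -> precompact_group G -> precompact_group H.
Proof.
move=> naG pG U /(subgroup_nbhs1_open_subgroup naG) [K [K_sub oK KU]].
have [A netA] := pG K (open_nbhs_nbhs (conj oK K_sub.1)).
have [_ Ksym Ktrans] := two_sided_ent_equiv K_sub.
(* replace each point of the net by a point of H close to it, if there is one *)
pose pick b : option H :=
  if pselect (exists a : H, two_sided_ent K (b, sv a)) is left e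
  then Some (proj1_sig (cid e)) else None.
exists (pmap pick A) => y; have [b bA b_y] := netA (sv y).
have [a pick_b] : exists a, pick b = Some a.
  by rewrite /pick; case: pselect => [e|ne]; [eexists | case: ne; exists y].
exists a; first by rewrite mem_pmap; apply/mapP; exists b.
move: pick_b; rewrite /pick; case: pselect => // e [<-]; case: (cid e) => c /= bc.
by have [cy yc] := Ktrans _ _ _ (Ksym _ _ bc) b_y; split; apply: KU.
Qed.

Lemma subgroup_prec_na : prec_na_group G -> prec_na_group H.
Proof.
move=> [hG pG naG]; split; first exact: subgroup_hausdorff.
- exact: subgroup_precompact.
- exact: subgroup_na.
Qed.

End Subgroup.

Arguments subgroup_val {G S S_subgroup}.

Section Separation.
Variable X : uniformType.
Hypotheses (hX : hausdorff_space X) (naX : na_uniform X).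

Lemma entourage_separating_pairs (l : seq (X * X)) :
  (forall p, p \in l -> p.1 <> p.2) ->
  exists2 E, @entourage X E & forall p, p \in l -> ~ E p.
Proof.
elim: l => [|[x y] l IH] sep_l; first by exists setT => //; apply: entourageT.
have [E1 E1_ent E1xy] : exists2 E, @entourage X E & ~ E (x, y).
  apply: contrapT => not_sep; apply: (sep_l (x, y) (mem_head _ _)).
  apply: (close_eq hX); rewrite entourage_close => E entE.
  by apply: contrapT => nE; apply: not_sep; exists E.
have [E2 E2_ent E2l] : exists2 E, @entourage X E & forall p, p \in l -> ~ E p.
  by apply: IH => p pl; apply: sep_l; rewrite in_cons pl orbT.
exists (E1 `&` E2); first exact: filterI.
by move=> p; rewrite in_cons => /orP[/eqP -> []|/E2l E2p []].
Qed.

Lemma equiv_entourage_separating (s : seq X) : exists2 R, @entourage X R &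
  equiv_rel_set R /\ {in s &, forall x y, R (x, y) -> x = y}.
Proof.
pose l := [seq p <- [seq (x, y) | x <- s, y <- s] | p.1 != p.2].
have [E E_ent El] : exists2 E, @entourage X E & forall p, p \in l -> ~ E p.
  by apply: entourage_separating_pairs => p; rewrite mem_filter => /andP[/eqP].
have [R R_ent [R_equiv RE]] := naX E_ent; exists R => //; split => // x y xs ys Rxy.
apply: contrapT => xy; apply: (El (x, y)); last exact: RE.
rewrite mem_filter /=; apply/andP; split; first exact/eqP.
by apply/allpairsP; exists (x, y).
Qed.

End Separation.

Section ClassIndex.
Variables (T : eqType) (R : set (T * T)).
Hypothesis R_equiv : equiv_rel_set R.

Definition class_index (s : seq T) (x : T) := find (fun a => `[< R (a, x) >]) s.

Lemma class_index_eq s x y : R (x, y) -> class_index s x = class_index s y.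
Proof.
case: R_equiv => _ Rsym Rtrans Rxy; apply: eq_find => a.
apply/asboolP/asboolP => [Rax|Ray]; first exact: Rtrans Rxy.
exact: Rtrans (Rsym _ _ Rxy).
Qed.

Lemma class_indexP s x : (exists2 a, a \in s & R (a, x)) ->
  class_index s x < size s /\ R (nth x s (class_index s x), x).
Proof.
move=> [a a_s Rax]; have has_s : has (fun a => `[< R (a, x) >]) s.
  by apply/hasP; exists a => //; apply/asboolP.
by split; [rewrite -has_find | apply/asboolP; exact: (nth_find x has_s)].
Qed.

Lemma class_index_mem s a : {in s &, forall x y, R (x, y) -> x = y} ->
  a \in s -> class_index s a = index a s.
Proof.
case: R_equiv => Rrefl _ _ Rsep a_s; apply: eq_in_find => b b_s /=.
apply/asboolP/eqP => [/Rsep -> //|->]; exact: Rrefl.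
Qed.

End ClassIndex.

Definition word_span (T : eqType) (G : groupType) (i : T -> G) : set G :=
  [set g | exists w, eval_word i w = g].

Lemma word_span_subgroup (T : eqType) (G : topGroupType) (i : T -> G) :
  is_subgroup (word_span i).
Proof.
split; first by exists [::]; rewrite /eval_word big_nil.
split => [_ _ [u <-] [v <-]|_ [u <-]]; first by exists (u ++ v); rewrite eval_word_cat.
by exists (inv_word u); rewrite eval_inv_word.
Qed.

Section FreeUniversal.
Variable X : uniformType.
Hypotheses (hX : hausdorff_space X) (naX : na_uniform X).
Variable P : topGroupType -> Prop.
Hypothesis P_discrete : forall T : finGroupType, P (discrete_group T).
Variables (G : topGroupType) (i : X -> G).
Hypothesis i_universal : free_universal P i.

Lemma hom_to_discrete (T : finGroupType) (R : set (X * X))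
    (f : X -> discrete_group T) : @entourage X R -> (forall x y, R (x, y) -> f x = f y) ->
  exists phi : G -> discrete_group T,
    [/\ group_hom phi, continuous phi & forall x, phi (i x) = f x].
Proof.
move=> R_ent fR; case: i_universal => _ _ /(_ _ f (P_discrete T)) [].
  move=> U U1; exists R => // x y /fR ->.
  by rewrite /two_sided_ent /= mulVg mulgV; split; apply: nbhs_singleton.
by move=> phi [phi_hom phi_cont phi_i _]; exists phi; split => // x; rewrite -phi_i.
Qed.

Lemma perm_rep_reduced_word (r : word X) : reduced r ->
  exists phi : G -> discrete_group {perm 'I_(size r).+2},
  [/\ group_hom phi, continuous phi,
      phi (eval_word i r) (inord 0) = inord (size r) &
      forall x, phi (i x) (inord 0) != inord (size r) \/ exists a, r = [:: (a, true)]].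
Proof.
move=> r_reduced; set s := map fst r; set n := size r.
have [R R_ent [R_equiv R_sep]] := equiv_entourage_separating hX naX s.
(* a point is sent to the permutation of the letter of r in its class, if any *)
pose f x : discrete_group {perm 'I_n.+2} :=
  nth (tperm (inord 0) ord_max) (map (word_perm r_reduced) s) (class_index R s x).
have f_class x y : R (x, y) -> f x = f y.
  by move=> Rxy; rewrite /f (class_index_eq R_equiv s Rxy).
have [phi [phi_hom phi_cont phi_i]] := hom_to_discrete R_ent f_class.
exists phi; split => //.
  rewrite eval_word_hom // (eq_in_eval_word (g2 := word_perm r_reduced)).
    exact: eval_word_perm.
  move=> a a_s; rewrite /= phi_i /f class_index_mem //.
  by rewrite (nth_map a) ?nth_index ?index_mem.
move=> x; rewrite phi_i /f.
have [lt_c|ge_c] := ltnP (class_index R s x) (size s).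
  rewrite (nth_map x) //; set a := nth x s _.
  by case: (word_perm0 r_reduced a) => [|r1]; [left | right; exists a].
left; rewrite nth_default; last by rewrite size_map.
rewrite -[_ (inord 0)]/((tperm (inord 0) ord_max : {perm 'I_n.+2}) (inord 0)) tpermL.
by apply/eqP => /(congr1 val); rewrite /= inordK //; lia.
Qed.

Lemma eval_reduced_word_neq1 (r : word X) :
  reduced r -> r != [::] -> eval_word i r != 1.
Proof.
move=> r_reduced r_nil; apply/eqP => r1.
have [phi [phi_hom _ phi_r _]] := perm_rep_reduced_word r_reduced.
move: phi_r; rewrite r1 group_hom1 // perm1 => /(congr1 (@nat_of_ord _)).
by rewrite !inordK //; case: (r) r_nil.
Qed.

Lemma eval_word_eq1_reduce w : eval_word i w = 1 -> reduce w = [::].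
Proof.
move=> w1; apply/eqP; apply: contraT => w_nil.
by have := eval_reduced_word_neq1 (reduce_reduced w) w_nil; rewrite eval_reduce w1 eqxx.
Qed.

Lemma eval_word_congr (H : groupType) (f : G -> H) u v :
  eval_word i u = eval_word i v -> eval_word (f \o i) u = eval_word (f \o i) v.
Proof.
move=> uv; have /eval_word_eq1_reduce uv1 : eval_word i (u ++ inv_word v) = 1.
  by rewrite eval_word_cat eval_inv_word uv mulgV.
apply: (mulIg (eval_word (f \o i) v)^-1); rewrite mulgV -eval_inv_word -eval_word_cat.
by rewrite -eval_reduce uv1 /eval_word big_nil.
Qed.

Local Notation span_group := (subgroup_type (word_span_subgroup i)).

(* The universal map into the subgroup spanned by the range of i, followed by
   the inclusion, is a continuous hom extending i: by uniqueness it is the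
   identity of G. *)
Lemma word_spanT : P span_group -> forall g, word_span i g.
Proof.
move=> P_span; case: i_universal => PG i_uc univ.
have i_span x : word_span i (i x) by exists [:: (x, true)]; rewrite eval_word1.
pose j x : span_group := subgroup_elt (word_span_subgroup i) (i_span x).
have j_uc : unif_cont_to_group j.
  move=> U /subgroup_nbhs1 [V [oV V1 VU]].
  have [E E_ent EV] := i_uc V (open_nbhs_nbhs (conj oV V1)).
  by exists E => // x y /EV[l r]; split; apply: VU.
have [phi [phi_hom phi_cont phi_j _]] := univ _ j P_span j_uc.
have [id' [_ _ _ id'_uniq]] := univ G i PG i_uc.
have val_phi : subgroup_val \o phi = id'.
  apply: id'_uniq; last by rewrite -compA phi_j.
  - by move=> a b /=; rewrite phi_hom.
  - move=> g; apply: continuous_comp; first exact: phi_cont.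
    exact: subgroup_val_continuous.
have id_id' : id = id' by apply: id'_uniq => // g.
by move=> g; rewrite -[g]/(id g) id_id' -val_phi; apply: subgroup_valP.
Qed.

Lemma free_group_on_range : P span_group -> free_group_on (range i).
Proof.
move=> /word_spanT span_i H f.
pose word_of g := proj1_sig (cid (span_i g)).
have word_ofK g : eval_word i (word_of g) = g := proj2_sig (cid (span_i g)).
exists (fun g => eval_word (f \o i) (word_of g)); split.
- move=> g h /=; rewrite -eval_word_cat; apply: eval_word_congr.
  by rewrite eval_word_cat !word_ofK.
- move=> _ /set_mem [x _ <-] /=; rewrite -[f (i x)]/((f \o i) x) -[RHS]eval_word1.
  by apply: eval_word_congr; rewrite word_ofK eval_word1.
- move=> psi psi_hom psi_f; apply: funext => g.
  rewrite -{1}(word_ofK g) eval_word_hom //.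
  by apply: eq_in_eval_word => x _; apply: psi_f; apply: mem_set; exists x.
Qed.

Lemma closed_range : P span_group -> closed (range i).
Proof.
move=> /word_spanT span_i; rewrite -openC openE => g.
have [w <-] := span_i g; rewrite -eval_reduce => not_range_w.
have [phi [phi_hom phi_cont phi_w phi_i]] := perm_rep_reduced_word (reduce_reduced w).
have phi_fiber_open : open (phi @^-1` [set phi (eval_word i (reduce w))]).
  by move/continuousP: phi_cont; apply; apply: discrete_open.
apply: filterS (open_nbhs_nbhs (conj phi_fiber_open erefl)) => h /= phi_h [x _ xh].
case: (phi_i x) => [|[a w_a]]; first by rewrite xh phi_h phi_w eqxx.
by apply: not_range_w; exists a => //; rewrite w_a eval_word1.
Qed.

Section Precompact.
Hypothesis pX : precompact_uniform X.

(* A finite net of an equivalence entourage R splits X into finitely many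
   R-classes, which a map into a finite permutation group tells apart. *)
Lemma range_inverse_unif_cont E : @entourage X E ->
  exists2 U : set G, nbhs 1 U & forall x y, two_sided_ent U (i x, i y) -> E (x, y).
Proof.
move=> E_ent; have [R R_ent [R_equiv RE]] := naX E_ent.
have [A netA] := pX R_ent.
have [_ Rsym Rtrans] := R_equiv.
pose f x : discrete_group {perm 'I_(size A).+1} :=
  tperm (inord 0) (inord (class_index R A x)).
have f_class x y : R (x, y) -> f x = f y.
  by move=> Rxy; rewrite /f (class_index_eq R_equiv A Rxy).
have [phi [phi_hom phi_cont phi_i]] := hom_to_discrete R_ent f_class.
exists (phi @^-1` [set 1]).
  apply: open_nbhs_nbhs; split; last by rewrite /= group_hom1.
  by move/continuousP: phi_cont; apply; apply: discrete_open.
move=> x y [/= phi_xy _]; apply: RE.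
have [ltx Rx] := class_indexP (netA x).
have [lty Ry] := class_indexP (netA y).
have fxy : f x = f y.
  by rewrite -[f x]invgK; apply: mulg1_eq; rewrite -!phi_i -group_homV // -phi_hom.
have cxy : class_index R A x = class_index R A y.
  move: (congr1 (fun s : {perm 'I_(size A).+1} => val (s (inord 0))) fxy).
  by rewrite /f /= !tpermL !inordK // ltnW.
by apply: Rtrans (Rsym _ _ Rx) _; rewrite cxy (set_nth_default y x lty).
Qed.

Lemma range_unif_embedding : unif_embedding i.
Proof.
case: (i_universal) => _ i_uc _; split => //; last exact: range_inverse_unif_cont.
move=> x y ixy.
apply: (close_eq hX); rewrite entourage_close => E.
move=> /range_inverse_unif_cont [U U1]; apply.
by rewrite ixy /two_sided_ent /= mulVg mulgV; split; apply: nbhs_singleton.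
Qed.

End Precompact.

End FreeUniversal.

Local Close Scope group_scope.

Theorem theorem3p12 (X : uniformType) :
  hausdorff_space X -> na_uniform X -> precompact_uniform X ->
  (forall (G : topGroupType) (i : X -> G), is_FPrecNA i ->
     [/\ unif_embedding i, free_group_on (range i) & closed (range i)]) /\
  (forall (G : topGroupType) (i : X -> G), is_FPro i -> unif_embedding i).
Proof.
move=> hX naX pX; split => [G i i_universal|G i i_universal].
- have P_span : prec_na_group (subgroup_type (word_span_subgroup i)).
    by apply: subgroup_prec_na; case: i_universal.
  have P_discrete := @discrete_group_prec_na.
  split.
  + exact: (range_unif_embedding hX naX P_discrete i_universal pX).
  + exact: (free_group_on_range hX naX P_discrete i_universal P_span).
  + exact: (closed_range hX naX P_discrete i_universal P_span).
- exact: (range_unif_embedding hX naX (@discrete_group_profinite) i_universal pX).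
Qed.
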